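(* Let $R$ be a finite commutative ring and let $C\subseteq R^n$ be a (not necessarily linear) code with $|C|\ge 2$, locality $r\ge 1$, minimum distance $d$, and let $\kappa$ be the minimum size of an information set of $C$. Then $$d\le n-\kappa-\left\lceil\frac{\kappa}{r}\right\rceil+2 \qquad\text{and}\qquad \frac{\kappa}{n}\le\frac{r}{r+1}.$$
   Context: For $S\subseteq\{1,\dots,n\}$, $C_S$ denotes the punctured code obtained by keeping only the coordinates in $S$. $S$ is an information set if $|C_S|=|C|$; $\kappa$ is the minimum cardinality of an information set. A coordinate $i$ has locality $r$ if there is $S_i\subseteq\{1,\dots,n\}\setminus\{i\}$ with $|S_i|\le r$ and $|C_{S_i}|=|C_{S_i\cup\{i\}}|$ (a recovering set for $i$). $C$ has locality $r$ if every coordinate has locality $r$. $d$ is the minimum Hamming distance between distinct codewords. *)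

From mathcomp Require Import all_boot all_order all_algebra.
Set Implicit Arguments.
Unset Strict Implicit.
Unset Printing Implicit Defensive.

Section Codes.
Variables (A : finType) (n : nat).
Notation word := {ffun 'I_n -> A}.

Definition puncture (S : {set 'I_n}) (c : word) : {ffun 'I_n -> option A} :=
  [ffun i => if i \in S then Some (c i) else None].

Definition punct_code (C : {set word}) (S : {set 'I_n}) :=
  [set puncture S c | c in C].

Definition info_set (C : {set word}) (S : {set 'I_n}) : bool :=
  #|punct_code C S| == #|C|.

Definition is_min_info_size (C : {set word}) (k : nat) : Prop :=
  (exists S, info_set C S /\ #|S| = k) /\
  (forall S, info_set C S -> k <= #|S|).

Definition recovering_set (C : {set word}) (r : nat) (i : 'I_n)
  (S : {set 'I_n}) : bool :=
  [&& i \notin S, #|S| <= r & #|punct_code C S| == #|punct_code C (i |: S)|].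

Definition has_locality (C : {set word}) (r : nat) : Prop :=
  forall i : 'I_n, exists S : {set 'I_n}, recovering_set C r i S.

Definition hamming (c c' : word) : nat := #|[set i | c i != c' i]|.

Definition is_min_dist (C : {set word}) (d : nat) : Prop :=
  (exists c, exists c', [/\ c \in C, c' \in C, c != c' & hamming c c' = d]) /\
  (forall c c', c \in C -> c' \in C -> c != c' -> d <= hamming c c').

End Codes.

(* ceiling of a / b for b >= 1 *)
Definition ceil_div (a b : nat) : nat := (a + b.-1) %/ b.

From mathcomp Require Import all_boot all_order all_algebra.
From mathcomp Require Import zify.

Set Implicit Arguments.
Unset Strict Implicit.
Unset Printing Implicit Defensive.

(* Grow a pair B ⊆ T of coordinate sets such that B determines T (codewords
   agreeing on B agree on T). While T is not everything, pick j ∉ T and a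
   recovering set S of j, and add S \ T to B and S ∪ {j} to T: B grows by at
   most r while |T \ B| grows by exactly 1, so |B| ≤ r |T \ B| throughout.
   Running to T = [n] makes B an information set, so κ ≤ |B| ≤ r(n - |B|).
   Stopping after ⌈κ/r⌉ - 1 steps leaves |B| < κ; padding B and T with the
   same κ - 1 - |B| coordinates outside T gives a set of size κ - 1 that
   determines T', so T' is no information set although
   |T'| = κ - 1 + ⌈κ/r⌉ - 1. Two distinct codewords agree on T', hence
   d ≤ n - |T'|. *)

Lemma subset_of_card (T : finType) (D : {set T}) k :
  k <= #|D| -> exists2 X : {set T}, X \subset D & #|X| = k.
Proof.
case/card_geqP=> s [uniq_s size_s sub_sD]; exists [set x in s].
  by apply/subsetP=> x; rewrite inE => /sub_sD.
by rewrite cardsE (card_uniqP uniq_s).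
Qed.

Lemma ceil_div_gt0 k r : 0 < r -> 0 < k -> 0 < ceil_div k r.
Proof. by move=> r_gt0 k_gt0; rewrite divn_gt0 //; lia. Qed.

Lemma mul_pred_ceil_div_lt k r : 0 < k -> r * (ceil_div k r).-1 < k.
Proof.
by move=> k_gt0; have := leq_divM (k + r.-1) r; rewrite /ceil_div; nia.
Qed.

Section Codes.
Variables (A : finType) (n : nat) (C : {set {ffun 'I_n -> A}}).
Implicit Types (B S T X : {set 'I_n}) (c : {ffun 'I_n -> A}).

Lemma puncture_eqP S c c' : puncture S c = puncture S c' <-> {in S, c =1 c'}.
Proof.
split=> [/ffunP eqcc' i iS | eqcc'].
  by have := eqcc' i; rewrite !ffunE iS => -[].
by apply/ffunP=> i; rewrite !ffunE; case: ifP => // /eqcc' ->.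
Qed.

Lemma info_setP S :
  reflect {in C &, forall c c', {in S, c =1 c'} -> c = c'} (info_set C S).
Proof.
by apply: (iffP imset_injP) => inj c c' cC c'C /puncture_eqP; apply: inj.
Qed.

Lemma info_setPn S :
  reflect (exists c c', [/\ c \in C, c' \in C, c != c' & {in S, c =1 c'}])
          (~~ info_set C S).
Proof.
rewrite /info_set (sameP (@imset_injP _ _ (puncture S) C) (dinjectiveP _ C)).
apply: (iffP (dinjectivePn _ _)) =>
  [[c cC [c' /andP [/= c'c c'C] /puncture_eqP]] | ].
  by exists c, c'; rewrite eq_sym.
case=> c [c' [cC c'C cc' /puncture_eqP eqS]].
by exists c => //; exists c' => //; rewrite !inE eq_sym cc'.
Qed.

Lemma info_setT : info_set C [set: 'I_n].
Proof. by apply/info_setP=> c c' _ _ eqcc'; apply/ffunP=> i; apply: eqcc'. Qed.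

Lemma hamming_agree S c c' : {in S, c =1 c'} -> hamming c c' + #|S| <= n.
Proof.
move=> eqcc'; have diffC : [set i | c i != c' i] \subset ~: S.
  by apply/subsetP=> i; rewrite !inE; apply: contra => /eqcc' ->.
rewrite -[X in _ <= X](card_ord n) -(cardsC S) /hamming addnC leq_add2l.
exact: subset_leq_card.
Qed.

Definition determines B T :=
  {in C &, forall c c', {in B, c =1 c'} -> {in T, c =1 c'}}.

Lemma determines_sub B T : T \subset B -> determines B T.
Proof. by move=> sTB c c' _ _ eqB i /(subsetP sTB); apply: eqB. Qed.

Lemma determines_trans B T X :
  determines B T -> determines T X -> determines B X.
Proof. by move=> dBT dTX c c' cC c'C /(dBT _ _ cC c'C); apply: dTX. Qed.

Lemma determinesU B T X :
  determines B T -> determines B X -> determines B (T :|: X).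
Proof.
move=> dBT dBX c c' cC c'C eqB i; rewrite inE => /orP[].
  exact: dBT eqB i.
exact: dBX eqB i.
Qed.

Lemma determinesUr B T X : determines B T -> determines (B :|: X) (T :|: X).
Proof.
move=> dBT; apply: determinesU (determines_sub (subsetUr _ _)).
exact: determines_trans (determines_sub (subsetUl _ _)) dBT.
Qed.

Lemma info_set_determines B T : determines B T -> info_set C T -> info_set C B.
Proof.
move=> dBT /info_setP infoT; apply/info_setP=> c c' cC c'C eqB.
exact: infoT (dBT _ _ cC c'C eqB).
Qed.

Lemma determines_of_card B T :
  B \subset T -> #|punct_code C B| = #|punct_code C T| -> determines B T.
Proof.
move=> sBT eq_card.
pose restrict (w : {ffun 'I_n -> option A}) :=
  [ffun i => if i \in B then w i else None].
have restrictE c : restrict (puncture T c) = puncture B c.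
  apply/ffunP=> i; rewrite !ffunE; case: ifP => // iB.
  by rewrite (subsetP sBT _ iB).
have punctB : punct_code C B = restrict @: punct_code C T.
  rewrite /punct_code -imset_comp.
  by apply: eq_imset => c /=; rewrite restrictE.
have /imset_injP inj_restrict :
    #|restrict @: punct_code C T| == #|punct_code C T|.
  by rewrite -punctB eq_card.
move=> c c' cC c'C /puncture_eqP eqB; apply/puncture_eqP.
by apply: inj_restrict; rewrite ?imset_f ?restrictE.
Qed.

Lemma recovering_set_determines r i S :
  recovering_set C r i S -> determines S [set i].
Proof.
case/and3P=> _ _ /eqP /(determines_of_card (subsetUr _ _)) dSiS.
exact: determines_trans dSiS (determines_sub (subsetUl _ _)).
Qed.

Lemma info_set_card_gt0 S : 1 < #|C| -> info_set C S -> 0 < #|S|.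
Proof.
case/card_gt1P=> c [c' [cC c'C cc']] /info_setP infoS; rewrite card_gt0.
apply: contraNneq cc' => S0; apply/eqP/(infoS _ _ cC c'C).
by rewrite S0 => i; rewrite inE.
Qed.

Section MinimalInformationSets.
Variable kappa : nat.
Hypothesis min_info : forall S, info_set C S -> kappa <= #|S|.

Lemma determining_set_card B :
  determines B [set: 'I_n] -> kappa <= #|B|.
Proof. by move=> dB; apply/min_info/(info_set_determines dB)/info_setT. Qed.

Lemma not_info_set_extension B T :
  B \subset T -> determines B T -> #|B| < kappa ->
  exists2 T', ~~ info_set C T' & #|T'| = kappa.-1 + #|T :\: B|.
Proof.
move=> sBT dBT lt_B_kappa.
have cardB : #|B| + #|T :\: B| = #|T|.
  by rewrite cardsDS // subnKC ?subset_leq_card.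
have /subset_of_card[X sXT cardX] : kappa.-1 - #|B| <= #|~: T|.
  have dBTc : determines (B :|: ~: T) [set: 'I_n].
    by rewrite -(setUCr T); apply: determinesUr.
  have := determining_set_card dBTc.
  have : #|B :|: ~: T| <= #|B| + #|~: T| := leq_card_setU _ _; lia.
exists (T :|: X).
  apply/negP=> /(info_set_determines (determinesUr (X := X) dBT)) /min_info.
  have : #|B :|: X| <= #|B| + #|X| := leq_card_setU _ _; lia.
have TX0 : T :&: X = set0.
  by apply/disjoint_setI0; rewrite disjoint_sym disjoints_subset.
rewrite cardsU TX0 cards0 subn0; lia.
Qed.

Section Locality.
Variable r : nat.
Hypothesis locality : has_locality C r.

Lemma determines_recovery_step B T j :
  B \subset T -> determines B T -> j \notin T ->
  exists B' T', [/\ B' \subset T', determines B' T', #|B'| <= #|B| + r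
                  & #|T' :\: B'| = #|T :\: B|.+1].
Proof.
move=> sBT dBT jT; have [S recS] := locality j.
have /and3P[jS cardS _] := recS.
exists (B :|: (S :\: T)), (j |: (T :|: S)); split.
- apply/subsetP=> i; rewrite !inE => /orP[/(subsetP sBT) -> | /andP[_ ->]];
  by rewrite ?orbT.
- have TS : T :|: (S :\: T) = T :|: S.
    by apply/setP=> i; rewrite !inE; case: (i \in T).
  have dTS : determines (B :|: (S :\: T)) (T :|: S).
    by rewrite -TS; apply: determinesUr.
  have dTSj : determines (T :|: S) [set j].
    exact: determines_trans (determines_sub (subsetUr _ _))
                            (recovering_set_determines recS).
  exact: determinesU (determines_trans dTS dTSj) dTS.
- apply: leq_trans (leq_card_setU _ _) _; rewrite leq_add2l.
  exact: leq_trans (subset_leq_card (subsetDl _ _)) cardS.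
- have -> : (j |: (T :|: S)) :\: (B :|: (S :\: T)) = j |: (T :\: B).
    apply/setP=> i; rewrite !inE; have [-> | _] := eqVneq i j.
      by rewrite (negPf jS) (negPf jT) (contraNF (subsetP sBT j)).
    by case: (i \in T); case: (i \in S); case: (i \in B).
  by rewrite cardsU1 !inE (negPf jT) andbF.
Qed.

Lemma greedy_determining_pair t :
  exists B T, [/\ B \subset T, determines B T, #|B| <= r * #|T :\: B|,
                  #|T :\: B| <= t & #|T :\: B| < t -> T = [set: 'I_n]].
Proof.
elim: t => [|t [B [T [sBT dBT cardB gap_le gap_lt]]]].
  exists set0, set0; rewrite setD0 cards0.
  by split; rewrite ?sub0set ?determines_sub.
have [lt_gap_t | le_t_gap] := ltnP #|T :\: B| t.
  by exists B, T; split; rewrite ?(leqW gap_le) // => _; apply: gap_lt.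
have gap_t : #|T :\: B| = t by apply/eqP; rewrite eqn_leq gap_le.
have [T_full | [j]] := set_0Vmem (~: T).
  have T_setT : T = [set: 'I_n] by rewrite -[T]setCK T_full setC0.
  by exists B, T; split; rewrite ?(leqW gap_le).
rewrite inE => jT; have [B' [T' [sBT' dBT' cardB' gap']]] :=
  determines_recovery_step sBT dBT jT.
exists B', T'; split; rewrite ?gap' ?gap_t ?ltnn //.
by rewrite mulnS addnC (leq_trans cardB') // leq_add2r -gap_t.
Qed.

Lemma information_rate_bound : kappa * r.+1 <= r * n.
Proof.
have [B [T [_ dBT cardB _ gap_lt]]] := greedy_determining_pair n.+1.
have T_full : T = [set: 'I_n].
  by apply: gap_lt; have := max_card (T :\: B); rewrite card_ord.
rewrite T_full setTD in dBT cardB.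
have := determining_set_card dBT; have := cardsC B; rewrite card_ord; nia.
Qed.

Lemma locality_distance_bound d :
  0 < r -> 0 < kappa ->
  {in C &, forall c c', c != c' -> d <= hamming c c'} ->
  d + kappa + ceil_div kappa r <= n + 2.
Proof.
move=> r_gt0 kappa_gt0 min_dist; set t := (ceil_div kappa r).-1.
have [B [T [sBT dBT cardB gap_le gap_lt]]] := greedy_determining_pair t.
have lt_B_kappa : #|B| < kappa.
  apply: leq_ltn_trans cardB _.
  apply: leq_ltn_trans (mul_pred_ceil_div_lt r kappa_gt0).
  by rewrite leq_mul2l gap_le orbT.
have gap_t : #|T :\: B| = t.
  apply/eqP; rewrite eqn_leq gap_le leqNgt; apply/negP => /gap_lt T_full.
  rewrite T_full in dBT.
  by have := determining_set_card dBT; rewrite leqNgt lt_B_kappa.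
have [T' /info_setPn[c [c' [cC c'C cc' eqT']]] cardT'] :=
  not_info_set_extension sBT dBT lt_B_kappa.
have := hamming_agree eqT'; have := min_dist _ _ cC c'C cc'.
have := ceil_div_gt0 r_gt0 kappa_gt0; rewrite cardT' gap_t /t; lia.
Qed.
End Locality.
End MinimalInformationSets.
End Codes.

Theorem mainTheorem2 (R : finComNzRingType) (n : nat)
  (C : {set {ffun 'I_n -> R}}) (r d kappa : nat) :
  2 <= #|C| -> 1 <= r -> has_locality C r ->
  is_min_dist C d -> is_min_info_size C kappa ->
  d + kappa + ceil_div kappa r <= n + 2 /\
  kappa * r.+1 <= r * n.
Proof.
move=> C_gt1 r_gt0 loc [_ min_dist] [[S0 [infoS0 cardS0]] min_info].
have kappa_gt0 : 0 < kappa by rewrite -cardS0; apply: info_set_card_gt0 infoS0.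
split.
  exact: (locality_distance_bound min_info loc r_gt0 kappa_gt0 min_dist).
exact: (information_rate_bound min_info loc).
Qed.
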